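(* Let $k$ be an algebraically closed field, $A$ a graded Frobenius algebra of Gorenstein parameter $-\ell$, and $G\le\mathrm{GrAut}\,A$ a finite subgroup. Then $A*G$ is a graded Frobenius algebra of Gorenstein parameter $-\ell$.
   Context: Graded algebras are $\mathbb{N}$-graded $k$-algebras. For a graded module $M$, $M(n)_i=M_{n+i}$ and $D(M)=\bigoplus_i\mathrm{Hom}_k(M_{-i},k)$. A locally finite graded algebra $B$ is graded Frobenius of Gorenstein parameter $-\ell$ if $D(B)\cong B(\ell)$ as graded right $B$-modules. $A*G=A\otimes_kkG$ with $(a*g)(b*h)=ag(b)*gh$, graded by $A$. *)

From HB Require Import structures.
From mathcomp Require Import all_boot all_order all_algebra all_fingroup.
Set Implicit Arguments. Unset Strict Implicit. Unset Printing Implicit Defensive.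
Import Order.TTheory GRing.Theory Num.Theory.
Local Open Scope ring_scope.

Section GradedDefs.
Variable k : fieldType.
Variable V : lmodType k.

(* An N-graded k-algebra: a k-module V with a multiplication [mul], a unit
   [one], and the family of projections [pi n] onto the homogeneous
   components V_n, so that V = (+)_n V_n with V_n = {v | pi n v = v}. *)
Definition graded_alg (mul : V -> V -> V) (one : V) (pi : nat -> V -> V) : Prop :=
  [/\
      (forall x y z, mul x (mul y z) = mul (mul x y) z) /\
      (forall x, mul one x = x) /\ (forall x, mul x one = x),
      (forall x y z, mul (x + y) z = mul x z + mul y z) /\
      (forall x y z, mul x (y + z) = mul x y + mul x z),
      (forall (a : k) x y, mul (a *: x) y = a *: mul x y) /\
      (forall (a : k) x y, mul x (a *: y) = a *: mul x y) /\
      (forall n (a : k) x y, pi n (a *: x + y) = a *: pi n x + pi n y) /\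
      (forall n m v, pi n (pi m v) = if n == m then pi m v else 0) /\
      (forall v, exists N : nat, (forall n, (N <= n)%N -> pi n v = 0) /\
                                 v = \sum_(n < N) pi n v),
      (forall i j x y, pi i x = x -> pi j y = y -> pi (i + j)%N (mul x y) = mul x y)
    & pi 0%N one = one].

Definition locally_finite (pi : nat -> V -> V) : Prop :=
  forall n, exists s : seq V, (forall x, x \in s -> pi n x = x) /\
    forall v, pi n v = v -> exists c : 'I_(size s) -> k,
      v = \sum_(i < size s) c i *: s`_i.

Definition pi_int (pi : nat -> V -> V) (i : int) : V -> V :=
  match i with Posz n => pi n | Negz _ => fun _ => 0 end.

(* Graded Frobenius of Gorenstein parameter -l: D(B) ~= B(l) as graded right
   B-modules.  Elements of D(B) = (+)_i Hom_k(B_{-i}, k) are represented as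
   k-linear functionals on B vanishing on all but finitely many B_j;
   D(B)_i consists of those f with f = f o pi_{-i}.  B(l)_i = B_{l+i}.
   The right B-action on D(B) is (f.b)(x) = f(b x).
   [phi] is a graded right B-module isomorphism B(l) -> D(B). *)
Definition graded_frobenius (mul : V -> V -> V) (one : V) (pi : nat -> V -> V)
  (l : int) : Prop :=
  [/\ graded_alg mul one pi, locally_finite pi &
  exists phi : V -> V -> k,
    [/\
        (forall x (a : k) u v, phi x (a *: u + v) = a * phi x u + phi x v) /\
        (forall x, exists N : nat, forall j, (N <= j)%N -> forall v, phi x (pi j v) = 0),
        (forall (a : k) x y v, phi (a *: x + y) v = a * phi x v + phi y v),
        (* phi preserves degrees: B(l)_i -> D(B)_i *)
        (forall (i : int) x, pi_int pi (l + i) x = x ->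
            forall v, phi x v = phi x (pi_int pi (- i) v)),
        (forall x b v, phi (mul x b) v = phi x (mul b v)) &
        (forall x y, (forall v, phi x v = phi y v) -> x = y) /\
        (forall f : V -> k,
            (forall (a : k) u v, f (a *: u + v) = a * f u + f v) ->
            (exists N : nat, forall j, (N <= j)%N -> forall v, f (pi j v) = 0) ->
            exists x, forall v, phi x v = f v)]].

End GradedDefs.

Definition graded_aut (k : fieldType) (A : algType k) (pi : nat -> A -> A)
  (g : A -> A) : Prop :=
  [/\ bijective g,
      (forall (a : k) x y, g (a *: x + y) = a *: g x + g y),
      (forall x y, g (x * y) = g x * g y),
      g 1 = 1 &
      (forall n v, g (pi n v) = pi n (g v))].

(* A finite subgroup G <= GrAut A, presented as a faithful action of a finite
   group gT on A by graded algebra automorphisms. *)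
Definition grAut_subgroup (k : fieldType) (A : algType k) (pi : nat -> A -> A)
  (gT : finGroupType) (act : gT -> A -> A) : Prop :=
  [/\ (forall v, act 1%g v = v),
      (forall g h v, act (g * h)%g v = act g (act h v)),
      (forall g, graded_aut pi (act g)) &
      (forall g h, (forall v, act g v = act h v) -> g = h)].

(* The skew group algebra A*G = A (x) kG: an element is a function
   f : G -> A, standing for sum_g f(g) * g. *)
Section Skew.
Variables (k : fieldType) (A : algType k) (gT : finGroupType) (act : gT -> A -> A).

(* (a*g)(b*h) = a g(b) * gh *)
Definition skew_mul (f f' : {ffun gT -> A}) : {ffun gT -> A} :=
  [ffun x => \sum_(g : gT) \sum_(h : gT | (g * h)%g == x) f g * act g (f' h)].

Definition skew_one : {ffun gT -> A} := [ffun g => if g == 1%g then 1 else 0].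

(* graded by A: deg (a*g) = deg a *)
Definition skew_pi (pi : nat -> A -> A) (n : nat) (f : {ffun gT -> A}) : {ffun gT -> A} :=
  [ffun g => pi n (f g)].
End Skew.

From HB Require Import structures.
From mathcomp Require Import all_boot all_order all_algebra all_fingroup.
Set Implicit Arguments. Unset Strict Implicit. Unset Printing Implicit Defensive.
Import GRing.Theory.
Local Open Scope ring_scope.

(* A*G is the direct sum of the copies A g, graded by A, so the grading and the
   local finiteness of A are inherited coordinatewise.  Writing phi : A(l) -> D(A)
   for the given isomorphism, right A-linearity gives phi x v = phi 1 (x v); on A*G
   take <x, v> := phi 1 ((x v)_1), the coefficient of the identity.  It is right
   A*G-linear by associativity, and it expands as sum_g phi (x_g) (g (v_{g^-1})),
   so it identifies A*G(l) with D(A*G) one group coordinate at a time. *)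

Section LinearFunctions.
Variables (k : fieldType) (U W : lmodType k) (f : U -> W).
Hypothesis f_linear : linear f.

Let fL : {linear U -> W} := HB.pack f (GRing.isLinear.Build k U W *:%R f f_linear).

Lemma linear_fun0 : f 0 = 0. Proof. exact: (linear0 fL). Qed.

Lemma linear_funD : {morph f : x y / x + y}. Proof. exact: (linearD fL). Qed.

Lemma linear_funZ a x : f (a *: x) = a *: f x.
Proof. exact: scalable_linear f_linear a x. Qed.

Lemma linear_fun_sum (I : Type) (r : seq I) (P : pred I) (F : I -> U) :
  f (\sum_(i <- r | P i) F i) = \sum_(i <- r | P i) f (F i).
Proof. exact: (linear_sum fL). Qed.

End LinearFunctions.

Section Span.
Variables (k : fieldType) (V : lmodType k).

Definition in_span (s : seq V) (v : V) :=
  exists c : 'I_(size s) -> k, v = \sum_(i < size s) c i *: s`_i.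

Lemma in_span_sum (s : seq V) (I : Type) (r : seq I) (P : pred I) (F : I -> V) :
  (forall i, P i -> in_span s (F i)) -> in_span s (\sum_(i <- r | P i) F i).
Proof.
move=> sF; apply: big_ind => //.
  by exists (fun=> 0); rewrite big1 // => i _; rewrite scale0r.
move=> _ _ [c1 ->] [c2 ->]; exists (fun i => c1 i + c2 i).
by rewrite -big_split; apply: eq_bigr => i _; rewrite scalerDl.
Qed.

Lemma in_spanZ (s : seq V) a v : in_span s v -> in_span s (a *: v).
Proof.
move=> [c ->]; exists (fun i => a * c i).
by rewrite scaler_sumr; apply: eq_bigr => i _; rewrite scalerA.
Qed.

Lemma mem_in_span (s : seq V) v : v \in s -> in_span s v.
Proof.
move=> vs; pose j := Ordinal (etrans (index_mem v s) vs).
exists (fun i => (i == j)%:R); rewrite (bigD1 j) //= eqxx scale1r nth_index //.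
by rewrite big1 ?addr0 // => i /negbTE->; rewrite scale0r.
Qed.

End Span.

Lemma in_span_linear (k : fieldType) (V W : lmodType k) (f : V -> W)
    (s : seq V) (t : seq W) v :
  linear f -> {subset map f s <= t} -> in_span s v -> in_span t (f v).
Proof.
move=> f_lin fst [c ->]; rewrite (linear_fun_sum f_lin).
apply: in_span_sum => i _; rewrite (linear_funZ f_lin); apply/in_spanZ/mem_in_span.
by apply/fst/map_f/mem_nth.
Qed.

Lemma eventually_forall (T : finType) (P : T -> nat -> Prop) :
  (forall t, exists N, forall n, (N <= n)%N -> P t n) ->
  exists N, forall n, (N <= n)%N -> forall t, P t n.
Proof.
case/fin_all_exists=> N PN; exists (\max_t N t) => n le_n t.
by apply: PN; apply: leq_trans le_n; apply: leq_bigmax.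
Qed.

Section GradedAlgebra.
Variables (k : fieldType) (V : lmodType k) (mul : V -> V -> V) (one : V).
Variable pi : nat -> V -> V.
Hypothesis V_graded : graded_alg mul one pi.

Lemma graded_pi_linear n : linear (pi n).
Proof. by case: V_graded => _ _ [_ [_ [pi_lin _]]] _ _; apply: pi_lin. Qed.

Lemma graded_decomposition v : exists N, forall M, (N <= M)%N ->
  (forall n, (M <= n)%N -> pi n v = 0) /\ v = \sum_(n < M) pi n v.
Proof.
case: V_graded => _ _ [_ [_ [_ [_ fin]]]] _ _; have [N [pi_ge vE]] := fin v.
exists N => M le_NM; split=> [n le_Mn|]; first exact/pi_ge/(leq_trans le_NM).
rewrite {1}vE (big_ord_widen M (fun n => pi n v) le_NM) big_mkcond /=.
by apply: eq_bigr => n _; case: ltnP => // /pi_ge.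
Qed.

End GradedAlgebra.

Section SkewGroupAlgebra.
Variables (k : fieldType) (A : algType k) (gT : finGroupType).
Variables (act : gT -> A -> A) (pi : nat -> A -> A).
Hypothesis act1 : forall v, act 1%g v = v.
Hypothesis actM : forall g h v, act (g * h)%g v = act g (act h v).
Hypothesis act_aut : forall g, graded_aut pi (act g).
Hypothesis A_graded : graded_alg (fun x y : A => x * y) 1 pi.

Local Notation B := {ffun gT -> A}.
Local Notation smul := (skew_mul act).
Local Notation sone := (@skew_one k A gT).
Local Notation spi := (@skew_pi k A gT pi).

Lemma act_linear g : linear (act g). Proof. by case: (act_aut g). Qed.
Lemma act_mul g x y : act g (x * y) = act g x * act g y. Proof. by case: (act_aut g). Qed.
Lemma act_one g : act g 1 = 1. Proof. by case: (act_aut g). Qed.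
Lemma act_pi g n v : act g (pi n v) = pi n (act g v). Proof. by case: (act_aut g). Qed.

Lemma actK g : cancel (act g) (act g^-1).
Proof. by move=> v; rewrite -actM mulVg act1. Qed.

Lemma actVK g : cancel (act g^-1) (act g).
Proof. by move=> v; rewrite -actM mulgV act1. Qed.

Lemma act0 g : act g 0 = 0. Proof. exact: linear_fun0 (act_linear g). Qed.

Lemma act_pi_int g m v : act g (pi_int pi m v) = pi_int pi m (act g v).
Proof. by case: m => n /=; rewrite ?act_pi ?act0. Qed.

Lemma pi0 n : pi n 0 = 0. Proof. exact: linear_fun0 (graded_pi_linear A_graded n). Qed.

Lemma skew_mulE (x y : B) g :
  smul x y g = \sum_(h : gT) x h * act h (y (h^-1 * g)%g).
Proof.
rewrite ffunE; apply: eq_bigr => h _; rewrite (big_pred1 (h^-1 * g)%g) // => h' /=.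
by apply/eqP/eqP => [<-|->]; rewrite ?mulKg ?mulKVg.
Qed.

Lemma skew_mulA : associative smul.
Proof.
move=> x y z; apply/ffunP => g; rewrite !skew_mulE.
under eq_bigr => h _ do rewrite skew_mulE (linear_fun_sum (act_linear h)) mulr_sumr.
under [RHS]eq_bigr => h _ do rewrite skew_mulE mulr_suml.
rewrite [RHS]exchange_big; apply: eq_bigr => h _ /=.
rewrite [RHS](reindex_inj (mulgI h)); apply: eq_bigr => h' _ /=.
by rewrite mulKg act_mul actM invMg mulgA mulrA.
Qed.

Lemma skew_mul1l : left_id sone smul.
Proof.
move=> x; apply/ffunP => g; rewrite skew_mulE (bigD1 1%g) //= big1 ?addr0.
  by rewrite ffunE eqxx mul1r act1 invg1 mul1g.
by move=> h /negbTE h1; rewrite ffunE h1 mul0r.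
Qed.

Lemma skew_mul1r : right_id sone smul.
Proof.
move=> x; apply/ffunP => g; rewrite skew_mulE (bigD1 g) //= big1 ?addr0.
  by rewrite ffunE mulVg eqxx act_one mulr1.
by move=> h /negbTE hg; rewrite ffunE -eq_mulVg1 hg act0 mulr0.
Qed.

Lemma skew_mulDl : left_distributive smul +%R.
Proof.
move=> x y z; apply/ffunP => g; rewrite [RHS]ffunE !skew_mulE -big_split.
by apply: eq_bigr => h _; rewrite ffunE mulrDl.
Qed.

Lemma skew_mulDr : right_distributive smul +%R.
Proof.
move=> x y z; apply/ffunP => g; rewrite [RHS]ffunE !skew_mulE -big_split.
by apply: eq_bigr => h _; rewrite ffunE (linear_funD (act_linear h)) mulrDr.
Qed.

Lemma skew_mulZl a (x y : B) : smul (a *: x) y = a *: smul x y.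
Proof.
apply/ffunP => g; rewrite [RHS]ffunE !skew_mulE scaler_sumr.
by apply: eq_bigr => h _; rewrite ffunE scalerAl.
Qed.

Lemma skew_mulZr a (x y : B) : smul x (a *: y) = a *: smul x y.
Proof.
apply/ffunP => g; rewrite [RHS]ffunE !skew_mulE scaler_sumr.
by apply: eq_bigr => h _; rewrite ffunE (linear_funZ (act_linear h)) scalerAr.
Qed.

Lemma skew_pi_linear n : linear (spi n).
Proof.
by move=> a x y; apply/ffunP => g; rewrite !ffunE (graded_pi_linear A_graded).
Qed.

Lemma skew_pi_int m (x : B) g : pi_int spi m x g = pi_int pi m (x g).
Proof. by case: m => n /=; rewrite ffunE. Qed.

Lemma skew_pi_idem n m (x : B) : spi n (spi m x) = if n == m then spi m x else 0.
Proof.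
case: A_graded => _ _ [_ [_ [_ [pi_idem _]]]] _ _.
by apply/ffunP => g; rewrite !ffunE pi_idem; case: eqP; rewrite ?ffunE.
Qed.

Lemma skew_decomposition (x : B) : exists N : nat,
  (forall n, (N <= n)%N -> spi n x = 0) /\ x = \sum_(n < N) spi n x.
Proof.
have [N xN] := eventually_forall (fun g => graded_decomposition A_graded (x g)).
exists N; split=> [n le_Nn|]; apply/ffunP => g.
  by rewrite !ffunE; case: (xN n le_Nn g) => /(_ n (leqnn n)).
rewrite sum_ffunE {1}(proj2 (xN N (leqnn N) g)).
by apply: eq_bigr => n _; rewrite ffunE.
Qed.

Lemma skew_pi_mul i j (x y : B) :
  spi i x = x -> spi j y = y -> spi (i + j) (smul x y) = smul x y.
Proof.
case: A_graded => _ _ _ pi_mul _ xi yj; apply/ffunP => g.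
rewrite ffunE skew_mulE (linear_fun_sum (graded_pi_linear A_graded _)).
apply: eq_bigr => h _; apply: pi_mul; first by rewrite -[in RHS]xi ffunE.
by rewrite -act_pi -[in RHS]yj ffunE.
Qed.

Lemma skew_pi_one : spi 0 sone = sone.
Proof.
case: A_graded => _ _ _ _ pi_one; apply/ffunP => g.
by rewrite !ffunE; case: eqP; rewrite ?pi_one ?pi0.
Qed.

Lemma skew_graded_alg : graded_alg smul sone spi.
Proof.
split; [split; [exact: skew_mulA | split; [exact: skew_mul1l | exact: skew_mul1r]]
      | split; [exact: skew_mulDl | exact: skew_mulDr]
      | do ![split] | exact: skew_pi_mul | exact: skew_pi_one].
- exact: skew_mulZl.
- exact: skew_mulZr.
- exact: skew_pi_linear.
- exact: skew_pi_idem.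
- exact: skew_decomposition.
Qed.

Definition skew_elem (h : gT) (a : A) : B := [ffun g => if g == h then a else 0].

Lemma skew_elem_linear h : linear (skew_elem h).
Proof.
by move=> a x y; apply/ffunP => g; rewrite !ffunE; case: eqP; rewrite ?scaler0 ?addr0.
Qed.

Lemma skew_elem_sum (x : B) : x = \sum_(h : gT) skew_elem h (x h).
Proof.
apply/ffunP => g; rewrite sum_ffunE (bigD1 g) //= big1 ?addr0 => [|h /negbTE hg].
  by rewrite ffunE eqxx.
by rewrite ffunE eq_sym hg.
Qed.

Lemma skew_pi_elem n h a : spi n (skew_elem h a) = skew_elem h (pi n a).
Proof. by apply/ffunP => g; rewrite !ffunE; case: eqP; rewrite ?pi0. Qed.

Lemma skew_locally_finite : locally_finite pi -> locally_finite spi.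
Proof.
move=> A_fin n; have [s [s_hom s_span]] := A_fin n.
exists [seq skew_elem h a | h <- enum gT, a <- s]; split.
  by move=> _ /allpairsP[[h a] [_ /= /s_hom a_hom ->]]; rewrite skew_pi_elem a_hom.
move=> x x_hom; rewrite [x]skew_elem_sum; apply: in_span_sum => h _.
have: in_span s (x h) by apply: s_span; rewrite -[in RHS]x_hom ffunE.
apply: in_span_linear (skew_elem_linear h) _ => _ /mapP[a a_s ->].
by apply: allpairs_f; rewrite ?mem_enum.
Qed.

Section Pairing.
Variable phi : A -> A -> k.
Hypothesis phi_scalar : forall x, scalar (phi x).
Hypothesis phi_mulr : forall x b v, phi (x * b) v = phi x (b * v).

Definition skew_pairing (x v : B) : k :=
  \sum_(g : gT) phi (x g) (act g (v g^-1)%g).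

Lemma skew_pairing_scalar x : scalar (skew_pairing x).
Proof.
move=> a u v; rewrite /skew_pairing mulr_sumr -big_split; apply: eq_bigr => g _.
by rewrite !ffunE act_linear phi_scalar.
Qed.

Lemma skew_pairing_unit x v : skew_pairing x v = phi 1 (smul x v 1%g).
Proof.
rewrite skew_mulE (linear_fun_sum (W := k^o) (phi_scalar 1)); apply: eq_bigr => g _.
by rewrite -phi_mulr mul1r mulg1.
Qed.

Lemma skew_pairing_mulr x b v :
  skew_pairing (smul x b) v = skew_pairing x (smul b v).
Proof. by rewrite !skew_pairing_unit skew_mulA. Qed.

Lemma skew_pairing_elem x g a :
  skew_pairing x (skew_elem g^-1 (act g^-1 a)) = phi (x g) a.
Proof.
rewrite /skew_pairing (bigD1 g) //= big1 ?addr0 => [|h hg].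
  by rewrite ffunE eqxx actVK.
rewrite ffunE (inj_eq invg_inj) (negbTE hg) act0.
exact: (linear_fun0 (W := k^o) (phi_scalar _)).
Qed.

Lemma skew_pairing_finite x :
  (forall y, exists N : nat, forall j, (N <= j)%N -> forall v, phi y (pi j v) = 0) ->
  exists N : nat, forall j, (N <= j)%N -> forall v, skew_pairing x (spi j v) = 0.
Proof.
move=> phi_fin; have [N xN] := eventually_forall (fun g => phi_fin (x g)).
exists N => j le_Nj v; rewrite /skew_pairing big1 // => g _.
by rewrite ffunE act_pi xN.
Qed.

Lemma skew_pairing_linear :
  (forall (a : k) x y v, phi (a *: x + y) v = a * phi x v + phi y v) ->
  forall (a : k) x y v,
    skew_pairing (a *: x + y) v = a * skew_pairing x v + skew_pairing y v.
Proof.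
move=> phi_lin a x y v; rewrite /skew_pairing mulr_sumr -big_split.
by apply: eq_bigr => g _; rewrite !ffunE phi_lin.
Qed.

Lemma skew_pairing_graded l :
  (forall (i : int) x, pi_int pi (l + i) x = x ->
     forall v, phi x v = phi x (pi_int pi (- i) v)) ->
  forall (i : int) x, pi_int spi (l + i) x = x ->
    forall v, skew_pairing x v = skew_pairing x (pi_int spi (- i) v).
Proof.
move=> phi_deg i x x_hom v; apply: eq_bigr => g _.
by rewrite skew_pi_int act_pi_int -phi_deg // -skew_pi_int x_hom.
Qed.

Lemma skew_pairing_inj :
  (forall x y, (forall v, phi x v = phi y v) -> x = y) ->
  forall x y, (forall v, skew_pairing x v = skew_pairing y v) -> x = y.
Proof.
move=> phi_inj x y xy; apply/ffunP => g; apply: phi_inj => a.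
by rewrite -!skew_pairing_elem xy.
Qed.

Lemma skew_pairing_surj :
  (forall f : A -> k, scalar f ->
     (exists N : nat, forall j, (N <= j)%N -> forall v, f (pi j v) = 0) ->
     exists x, forall v, phi x v = f v) ->
  forall f : B -> k, scalar f ->
    (exists N : nat, forall j, (N <= j)%N -> forall v, f (spi j v) = 0) ->
    exists x, forall v, skew_pairing x v = f v.
Proof.
move=> phi_surj f f_scalar [N f_fin].
pose f_ g a := f (skew_elem g^-1 (act g^-1 a)).
have /fin_all_exists[xf xfE] : forall g, exists xg, forall a, phi xg a = f_ g a.
  move=> g; apply: phi_surj => [b u v|].
    by rewrite /f_ act_linear skew_elem_linear f_scalar.
  by exists N => j le_Nj v; rewrite /f_ act_pi -skew_pi_elem f_fin.
exists [ffun g => xf g] => v; rewrite [in RHS](skew_elem_sum v).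
rewrite (linear_fun_sum (W := k^o) f_scalar) (reindex_inj invg_inj).
by apply: eq_bigr => g _; rewrite ffunE xfE /f_ actK.
Qed.

End Pairing.

Lemma skew_graded_frobenius l :
  graded_frobenius (fun x y : A => x * y) 1 pi l -> graded_frobenius smul sone spi l.
Proof.
case=> _ A_fin [phi [[phi_scalar phi_fin] phi_lin phi_deg phi_mulr [phi_inj phi_surj]]].
split; [exact: skew_graded_alg | exact: skew_locally_finite A_fin |].
exists (skew_pairing phi); split.
- split; [exact: skew_pairing_scalar | by move=> x; apply: skew_pairing_finite].
- exact: skew_pairing_linear.
- exact: skew_pairing_graded.
- by move=> x b v; apply: skew_pairing_mulr.
- by split; [apply: skew_pairing_inj | apply: skew_pairing_surj].
Qed.

End SkewGroupAlgebra.

Theorem lemma2p26 (k : closedFieldType) (A : algType k) (pi : nat -> A -> A)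
  (l : int) (gT : finGroupType) (act : gT -> A -> A) :
  graded_frobenius (fun x y : A => x * y) 1 pi l ->
  grAut_subgroup pi act ->
  graded_frobenius (skew_mul act) (@skew_one k A gT) (skew_pi pi) l.
Proof.
move=> A_frob [act1 actM act_aut _]; have [A_graded _ _] := A_frob.
exact: skew_graded_frobenius.
Qed.
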